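(* Let $\mathbb{F}$ be a field, $A\in\mathbb{F}^{n\times n}$ such that a product of a row vector by $A$ costs at most $\mu$ arithmetic operations, $V_0\in\mathbb{F}^n$, and let a list of $d$ vectors $V_0,V_1,\dots,V_{d-1}\in\mathbb{F}^n$ be given. Consider the following check (for a finite subset $\mathbb{S}\subseteq\mathbb{F}$): uniformly sample $Y\in\mathbb{S}^n$, compute $H=Y^TA$, and accept iff $HV_{i-1}=Y^TV_i$ for every $i=1,\dots,d-1$. This check is perfectly complete (if $V_i=A^iV_0$ for all $i$ it always accepts), sound (if $V_i\neq A^iV_0$ for some $i$, it accepts with probability at most $1/|\mathbb{S}|$), and requires $\mu+4dn$ arithmetic operations.
   Context: Arithmetic operations are field operations in $\mathbb{F}$; equality tests and random sampling are not counted. *)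

From HB Require Import structures.
From mathcomp Require Import all_boot all_order all_algebra.
Set Implicit Arguments. Unset Strict Implicit. Unset Printing Implicit Defensive.
Import GRing.Theory.
Local Open Scope ring_scope.

(* Cost model: a computation returning a value together with the number of  *)
(* arithmetic (field) operations it performed.  Field additions and         *)
(* multiplications cost 1; equality tests, boolean connectives and random  *)
(* sampling are free (as stated in the paper's context).                    *)
Definition Cost (T : Type) : Type := (T * nat)%type.
Definition cret {T} (x : T) : Cost T := (x, 0%N).
Definition cbind {T U} (m : Cost T) (f : T -> Cost U) : Cost U :=
  let (y, k) := f m.1 in (y, (m.2 + k)%N).
Definition cadd {F : fieldType} (a b : F) : Cost F := (a + b, 1%N).
Definition cmul {F : fieldType} (a b : F) : Cost F := (a * b, 1%N).

Fixpoint dot_aux {F : fieldType} {n : nat} (u : 'rV[F]_n) (v : 'cV[F]_n)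
    (s : seq 'I_n) : Cost F :=
  match s with
  | [::] => cret 0
  | [:: j] => cmul (u 0 j) (v j 0)
  | j :: s' => cbind (cmul (u 0 j) (v j 0))
                 (fun p => cbind (dot_aux u v s') (fun q => cadd p q))
  end.
Definition cdot {F : fieldType} {n : nat} (u : 'rV[F]_n) (v : 'cV[F]_n) : Cost F :=
  dot_aux u v (enum 'I_n).

(* The check, given Y^T as the row vector y, a (counted) oracle computing
   y |-> y A, and the list V_0, ..., V_{d-1} (as V : nat -> 'cV_n, only the
   indices < d are used).   *)
Definition check_loop {F : fieldType} {n : nat} (H y : 'rV[F]_n)
    (V : nat -> 'cV[F]_n) (idx : seq nat) : Cost bool :=
  foldr (fun i acc =>
           cbind (cdot H (V i.-1)) (fun a =>
           cbind (cdot y (V i)) (fun b =>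
           cbind acc (fun ok => cret ((a == b) && ok)))))
        (cret true) idx.

Definition freivalds_check {F : fieldType} {n : nat}
    (rowA : 'rV[F]_n -> Cost 'rV[F]_n) (d : nat) (V : nat -> 'cV[F]_n)
    (y : 'rV[F]_n) : Cost bool :=
  cbind (rowA y) (fun H => check_loop H y V (iota 1 d.-1)).

(* Uniform sampling of Y in S^n, S given as a duplicate-free list of size k:
   Y is determined by an index function f : 'I_n -> 'I_k, uniformly chosen. *)
Definition sample_row {F : fieldType} {n k : nat} (S : seq F)
    (f : {ffun 'I_n -> 'I_k}) : 'rV[F]_n :=
  \row_j nth 0 S (f j).

Definition accept_prob {F : fieldType} {n : nat}
    (rowA : 'rV[F]_n -> Cost 'rV[F]_n) (d : nat) (V : nat -> 'cV[F]_n)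
    (S : seq F) : rat :=
  (#|[set f : {ffun 'I_n -> 'I_(size S)} |
        (freivalds_check rowA d V (sample_row S f)).1]|%:R
   / (#|{ffun 'I_n -> 'I_(size S)}|%:R)).

From HB Require Import structures.
From mathcomp Require Import all_boot all_order all_algebra.
From mathcomp Require Import zify.
Import GRing.Theory Num.Theory.
Set Implicit Arguments. Unset Strict Implicit.
Local Open Scope ring_scope.

(* The check accepts [Y] iff [Y^T (A V_{i-1} - V_i) = 0] for every [i].  If
   the [V_i] are a Krylov sequence all these vanish.  Otherwise some
   [w := A V_{m-1} - V_m] is nonzero, say [w_j <> 0], and acceptance forces
   the linear form [Y |-> Y^T w] to vanish; once the coordinates of [Y] other
   than [Y_j] are fixed, at most one value of [Y_j] in [S] does that, so at
   most a [1/|S|] fraction of the samples is accepted.  Each of the [d - 1]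
   tests costs two inner products of [2n] operations. *)

Lemma cbind_val T U (m : Cost T) (f : T -> Cost U) : (cbind m f).1 = (f m.1).1.
Proof. by rewrite /cbind; case: (f m.1). Qed.

Lemma cbind_cost T U (m : Cost T) (f : T -> Cost U) :
  (cbind m f).2 = (m.2 + (f m.1).2)%N.
Proof. by rewrite /cbind; case: (f m.1). Qed.

Section InnerProduct.

Variables (F : fieldType) (n : nat) (u : 'rV[F]_n) (v : 'cV[F]_n).

Lemma dot_aux_val s : (dot_aux u v s).1 = \sum_(j <- s) u 0 j * v j 0.
Proof.
elim: s => [|j [|k s] IH]; first by rewrite big_nil.
  by rewrite big_seq1.
by rewrite [dot_aux _ _ _]/= !cbind_val /= IH big_cons.
Qed.

Lemma dot_aux_cost s : ((dot_aux u v s).2 <= 2 * size s)%N.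
Proof.
elim: s => [|j [|k s] IH] //.
rewrite [dot_aux _ _ _]/= !cbind_cost /=; rewrite /= in IH; lia.
Qed.

Lemma cdot_val : (cdot u v).1 = (u *m v) 0 0.
Proof. by rewrite /cdot dot_aux_val mxE big_enum. Qed.

Lemma cdot_cost : ((cdot u v).2 <= 2 * n)%N.
Proof. by have := dot_aux_cost (enum 'I_n); rewrite size_enum_ord. Qed.

End InnerProduct.

Section Check.

Variables (F : fieldType) (n : nat) (V : nat -> 'cV[F]_n).

Lemma check_loop_val (H y : 'rV[F]_n) idx :
  (check_loop H y V idx).1 =
  all (fun i => (H *m V i.-1) 0 0 == (y *m V i) 0 0) idx.
Proof. by elim: idx => [|i s IH] //=; rewrite !cdot_val IH. Qed.

Lemma check_loop_cost (H y : 'rV[F]_n) idx :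
  ((check_loop H y V idx).2 <= 4 * n * size idx)%N.
Proof.
elim: idx => [|i s IH] //=.
have := cdot_cost H (V i.-1); have := cdot_cost y (V i); lia.
Qed.

Variables (A : 'M[F]_n) (rowA : 'rV[F]_n -> Cost 'rV[F]_n).
Hypothesis rowA_val : forall y, (rowA y).1 = y *m A.

Lemma freivalds_check_val d y :
  (freivalds_check rowA d V y).1 =
  all (fun i => (y *m (A *m V i.-1 - V i)) 0 0 == 0) (iota 1 d.-1).
Proof.
rewrite /freivalds_check cbind_val check_loop_val rowA_val.
by apply: eq_all => i; rewrite mulmxBr mulmxA !mxE subr_eq0.
Qed.

Lemma freivalds_check_cost mu d y :
  ((rowA y).2 <= mu)%N -> ((freivalds_check rowA d V y).2 <= mu + 4 * d * n)%N.
Proof.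
rewrite /freivalds_check cbind_cost => rowA_le.
have := check_loop_cost (rowA y).1 y (iota 1 d.-1); rewrite size_iota; nia.
Qed.

End Check.

Section Krylov.

Variables (F : fieldType) (n : nat) (A : 'M[F]_n) (V : nat -> 'cV[F]_n) (d : nat).

Lemma krylov_from_steps :
  (forall i, (0 < i < d)%N -> V i = A *m V i.-1) ->
  forall i, (i < d)%N -> V i = A ^+ i *m V 0%N.
Proof.
move=> step; elim=> [|i IH] lt_id; first by rewrite expr0 mul1mx.
by rewrite step //= IH 1?ltnW // exprS mulmxA.
Qed.

Lemma exists_bad_step :
  (exists i, (i < d)%N /\ V i <> A ^+ i *m V 0%N) ->
  exists2 m, m \in iota 1 d.-1 & A *m V m.-1 - V m != 0.
Proof.
move=> [i [lt_id bad]].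
have [steps|/allPn[m m_in]] :=
  altP (@allP _ (fun k => A *m V k.-1 == V k) (iota 1 d.-1)).
  case: bad; apply: krylov_from_steps lt_id => k k_range.
  by apply/esym/eqP/steps; rewrite mem_iota; lia.
by rewrite -subr_eq0; exists m.
Qed.

End Krylov.

Section KernelCount.

Variables (F : fieldType) (n : nat) (S : seq F) (w : 'cV[F]_n) (j0 : 'I_n).
Hypotheses (S_uniq : uniq S) (w_j0 : w j0 0 != 0).

Local Notation sample := {ffun 'I_n -> 'I_(size S)}.

Definition kernel_samples : {set sample} :=
  [set f | (sample_row S f *m w) 0 0 == 0].

Lemma sample_row_mulE (f : sample) :
  (sample_row S f *m w) 0 0 =
  nth 0 S (f j0) * w j0 0 + \sum_(j < n | j != j0) nth 0 S (f j) * w j 0.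
Proof.
rewrite mxE (bigD1 j0) //= !mxE; congr (_ + _).
by apply: eq_bigr => j _; rewrite mxE.
Qed.

Lemma kernel_samples_inj (f g : sample) :
  f \in kernel_samples -> g \in kernel_samples ->
  (forall j, j != j0 -> f j = g j) -> f = g.
Proof.
rewrite !inE !sample_row_mulE => /eqP f0 /eqP g0 fg.
have rest : \sum_(j < n | j != j0) nth 0 S (f j) * w j 0 =
            \sum_(j < n | j != j0) nth 0 S (g j) * w j 0.
  by apply: eq_bigr => j /fg ->.
have : nth 0 S (f j0) * w j0 0 + \sum_(j < n | j != j0) nth 0 S (g j) * w j 0 =
       nth 0 S (g j0) * w j0 0 + \sum_(j < n | j != j0) nth 0 S (g j) * w j 0.
  by rewrite -[in LHS]rest f0 g0.
move/addIr/(mulIf w_j0)/eqP.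
rewrite nth_uniq // => /eqP/val_inj fg0.
by apply/ffunP => j; case: (eqVneq j j0) => [->|/fg].
Qed.

(* Moving [f] along the [j0]-th coordinate embeds [kernel_samples * S] into
   all samples. *)
Lemma card_kernel_samples : (#|kernel_samples| * size S <= #|{: sample}|)%N.
Proof.
pose shift (ft : sample * 'I_(size S)) : sample :=
  [ffun j => if j == j0 then ft.2 else ft.1 j].
have shift_inj : {in setX kernel_samples [set: 'I_(size S)] &, injective shift}.
  move=> [f t] [g s] /setXP[kf _] /setXP[kg _] /= e.
  have e_at j : shift (f, t) j = shift (g, s) j by rewrite e.
  have := e_at j0; rewrite !ffunE eqxx /= => ->.
  congr (_, _); apply: kernel_samples_inj => // j nj.
  by have := e_at j; rewrite !ffunE (negbTE nj).
rewrite -[X in (_ * X)%N]card_ord -cardsT -cardsX -(card_in_imset shift_inj).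
exact: max_card.
Qed.

End KernelCount.

Theorem mainTheorem4 (F : fieldType) (n d mu : nat) (A : 'M[F]_n)
    (rowA : 'rV[F]_n -> Cost 'rV[F]_n)
    (rowA_val : forall y, (rowA y).1 = y *m A)
    (rowA_cost : forall y, ((rowA y).2 <= mu)%N)
    (V : nat -> 'cV[F]_n) (S : seq F) (S_uniq : uniq S) (S_ne : (0 < size S)%N) :
  (* perfect completeness *)
  ((forall i, (i < d)%N -> V i = A ^+ i *m V 0%N) ->
     forall y : 'rV[F]_n, (freivalds_check rowA d V y).1 = true) /\
  (* soundness *)
  ((exists i, (i < d)%N /\ V i <> A ^+ i *m V 0%N) ->
     accept_prob rowA d V S <= 1 / (size S)%:R) /\
  (* cost *)
  (forall y : 'rV[F]_n, ((freivalds_check rowA d V y).2 <= mu + 4 * d * n)%N).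
Proof.
have check_val := freivalds_check_val V rowA_val d.
split; [|split]; last by move=> y; apply: freivalds_check_cost.
  move=> krylov y; rewrite check_val; apply/allP => i.
  rewrite mem_iota => /andP[i_gt0 i_lt].
  have step : A *m V i.-1 = V i.
    rewrite (krylov i) 1?(krylov i.-1); try lia.
    by rewrite mulmxA -[in RHS](prednK i_gt0) exprS.
  by rewrite step subrr mulmx0 mxE.
case/exists_bad_step => m m_in /matrix0Pn[j0 [j]]; rewrite (ord1 j) => w_j0.
have accepted_kernel : [set f | (freivalds_check rowA d V (sample_row S f)).1]
                       \subset kernel_samples S (A *m V m.-1 - V m).
  by apply/subsetP => f; rewrite !inE check_val => /allP; apply; exact: m_in.
have := card_kernel_samples S_uniq w_j0.
rewrite /accept_prob ler_pdivrMr ?ltr0n ?card_ffun ?expn_gt0 ?card_ord ?S_ne //.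
move/(leq_trans (leq_mul (subset_leq_card accepted_kernel) (leqnn _))).
by rewrite mul1r mulrC ler_pdivlMr ?ltr0n // -natrM ler_nat mulnC.
Qed.
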